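(* Consider the system (with $c,k,b,s,\nu>0$, $h\in\mathbb{R}$) $$\frac{df}{dt}=w(f)(1-f)f-\nu f-h(1-2x),\qquad \frac{dx}{dt}=s\,x(1-x)(1-2f),\qquad w(f)=\frac{c}{1+e^{-k\frac{f}{1-f}+b}}.$$ The system undergoes a transcritical bifurcation at $(f^*,x^* )=(1/2,1)$, at the parameter value $$h^{**}=-\frac{c}{4(1+e^{b-k})}+\frac{\nu}{2},$$ where the branch of fixed points with $x=1$ (given by $h=-w(f)(1-f)f+\nu f$) intersects the branch of fixed points with $f=1/2$ (given, for $h\ne0$, by $x=\tfrac12\left(1+\tfrac{h^{**}}{h}\right)$). If $\lambda_1:=\dfrac{c k e^{b-k}}{(1+e^{b-k})^2}-\nu<0$ and $h^{**}>0$, then the two branches $x=1$ and $f=1/2$ exchange stability at this bifurcation point.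
   Context: The Jacobian of the system is $$J=\begin{pmatrix} w'(f)(f-f^2)+w(f)(1-2f)-\nu & 2h\\ -2s\,x(1-x) & s(1-2x)(1-2f)\end{pmatrix}.$$ A fixed point is stable if all eigenvalues of $J$ have negative real part and unstable if some eigenvalue has positive real part. *)

From Stdlib Require Import Reals Lra.
Open Scope R_scope.

Definition w (c k b f : R) : R := c / (1 + exp (- k * (f / (1 - f)) + b)).

Definition Fsys (c k b nu h f x : R) : R :=
  w c k b f * (1 - f) * f - nu * f - h * (1 - 2 * x).
Definition Gsys (s f x : R) : R := s * x * (1 - x) * (1 - 2 * f).

(* mu = re + i*im is an eigenvalue of the real 2x2 matrix [[a11,a12],[a21,a22]]:
   det(J - mu I) = 0, written out in real and imaginary parts. *)
Definition is_eigenvalue (a11 a12 a21 a22 re im : R) : Prop :=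
  (a11 - re) * (a22 - re) - im * im - a12 * a21 = 0 /\
  im * ((a11 - re) + (a22 - re)) = 0.

Definition stable_mx (a11 a12 a21 a22 : R) : Prop :=
  forall re im, is_eigenvalue a11 a12 a21 a22 re im -> re < 0.
Definition unstable_mx (a11 a12 a21 a22 : R) : Prop :=
  exists re im, is_eigenvalue a11 a12 a21 a22 re im /\ 0 < re.

(* The Jacobian of the system; w' is the derivative of w (supplied as a
   function together with the hypothesis that it is the derivative). *)
Definition J11 (c k b nu : R) (w' : R -> R) (f : R) : R :=
  w' f * (f - f ^ 2) + w c k b f * (1 - 2 * f) - nu.
Definition J12 (h : R) : R := 2 * h.
Definition J21 (s x : R) : R := - 2 * s * x * (1 - x).
Definition J22 (s f x : R) : R := s * (1 - 2 * x) * (1 - 2 * f).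

Definition stable_fp (c k b s nu h : R) (w' : R -> R) (f x : R) : Prop :=
  stable_mx (J11 c k b nu w' f) (J12 h) (J21 s x) (J22 s f x).
Definition unstable_fp (c k b s nu h : R) (w' : R -> R) (f x : R) : Prop :=
  unstable_mx (J11 c k b nu w' f) (J12 h) (J21 s x) (J22 s f x).

Definition hss (c k b nu : R) : R := - c / (4 * (1 + exp (b - k))) + nu / 2.
Definition lambda1 (c k b nu : R) : R :=
  c * k * exp (b - k) / (1 + exp (b - k)) ^ 2 - nu.
Definition h_branch_x1 (c k b nu f : R) : R := - w c k b f * (1 - f) * f + nu * f.
Definition x_branch_half (c k b nu h : R) : R := (1 + hss c k b nu / h) / 2.

(** Along the branch [x = 1] the Jacobian is lower triangular with diagonal
    [J11 = -h'(f)] and [J22 = s (2f - 1)].  At [f = 1/2] one has [J11 = lambda1 < 0],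
    so [h] is strictly increasing near [1/2] and the sign of [J22], hence
    stability, flips exactly when [h] crosses [h**].  Along the branch [f = 1/2]
    one has [J22 = 0], trace [lambda1 < 0] and determinant [4 s h x (1 - x)],
    which is positive iff [x] lies in [(0,1)], i.e. iff [h > h**] (for [h > 0]). *)
From Stdlib Require Import Reals Lra.
From Coquelicot Require Import Coquelicot.
Open Scope R_scope.

Lemma stable_mx_of_trace_det a11 a12 a21 a22 :
  a11 + a22 < 0 -> 0 < a11 * a22 - a12 * a21 -> stable_mx a11 a12 a21 a22.
Proof.
  intros Htr Hdet re im [Ere Eim].
  destruct (Req_dec im 0) as [-> | Him].
  - (* a real eigenvalue is a root of re^2 - tr re + det, which is positive for re >= 0 *)
    destruct (Rlt_or_le re 0) as [Hre | Hre]; [exact Hre | nra].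
  - assert (Hsum : (a11 - re) + (a22 - re) = 0).
    { apply (Rmult_eq_reg_l im); [lra | exact Him]. }
    lra.
Qed.

Lemma unstable_mx_of_det a11 a12 a21 a22 :
  a11 * a22 - a12 * a21 < 0 -> unstable_mx a11 a12 a21 a22.
Proof.
  intros Hdet.
  set (tr := a11 + a22).
  set (S := sqrt (tr * tr - 4 * (a11 * a22 - a12 * a21))).
  assert (HS2 : S * S = tr * tr - 4 * (a11 * a22 - a12 * a21))
    by (apply sqrt_sqrt; nra).
  assert (HS0 : 0 <= S) by apply sqrt_pos.
  exists ((tr + S) / 2), 0; split.
  - split; [| ring].
    replace ((a11 - (tr + S) / 2) * (a22 - (tr + S) / 2) - 0 * 0 - a12 * a21)
      with ((S * S - (tr * tr - 4 * (a11 * a22 - a12 * a21))) / 4)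
      by (unfold tr; field).
    rewrite HS2. field.
  - destruct (Rlt_or_le (- tr) S) as [HtrS | HStr]; [lra |].
    assert (S * S <= - tr * - tr) by (apply Rmult_le_compat; lra).
    lra.
Qed.

Lemma stable_fp_x1 c k b s nu h w' f :
  0 < s -> J11 c k b nu w' f < 0 -> f < 1 / 2 -> stable_fp c k b s nu h w' f 1.
Proof.
  intros Hs HJ Hf.
  assert (HJ22 : J22 s f 1 < 0) by (unfold J22; nra).
  apply stable_mx_of_trace_det; unfold J21; nra.
Qed.

Lemma unstable_fp_x1 c k b s nu h w' f :
  0 < s -> J11 c k b nu w' f < 0 -> 1 / 2 < f -> unstable_fp c k b s nu h w' f 1.
Proof.
  intros Hs HJ Hf.
  assert (HJ22 : 0 < J22 s f 1) by (unfold J22; nra).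
  apply unstable_mx_of_det; unfold J21; nra.
Qed.

Lemma stable_fp_half c k b s nu h w' x :
  0 < s -> 0 < h -> J11 c k b nu w' (1 / 2) < 0 -> 0 < x * (1 - x) ->
  stable_fp c k b s nu h w' (1 / 2) x.
Proof.
  intros Hs Hh HJ Hx. apply stable_mx_of_trace_det; unfold J12, J21, J22.
  - lra.
  - assert (0 < s * h) by nra. nra.
Qed.

Lemma unstable_fp_half c k b s nu h w' x :
  0 < s -> 0 < h -> x * (1 - x) < 0 -> unstable_fp c k b s nu h w' (1 / 2) x.
Proof.
  intros Hs Hh Hx. apply unstable_mx_of_det; unfold J12, J21, J22.
  assert (0 < s * h) by nra. nra.
Qed.

Definition dw (c k b f : R) : R :=
  c * exp (- k * (f / (1 - f)) + b) * k / (1 - f) ^ 2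
    / (1 + exp (- k * (f / (1 - f)) + b)) ^ 2.

Lemma exp_arg_half k b : exp (- k * (1 / 2 / (1 - 1 / 2)) + b) = exp (b - k).
Proof. f_equal. field. Qed.

Lemma w_half c k b : w c k b (1 / 2) = c / (1 + exp (b - k)).
Proof. unfold w. rewrite exp_arg_half. reflexivity. Qed.

Lemma is_derive_w c k b f : f < 1 -> is_derive (w c k b) f (dw c k b f).
Proof.
  intros Hf. unfold w, dw. pose proof (exp_pos (- k * (f / (1 - f)) + b)).
  auto_derive; unfold Rdiv, Rminus in *.
  - repeat split; lra.
  - field. lra.
Qed.

Lemma J11_dw c k b nu w' f :
  (forall f, f < 1 -> derivable_pt_lim (w c k b) f (w' f)) -> f < 1 ->
  J11 c k b nu w' f = J11 c k b nu (dw c k b) f.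
Proof.
  intros Hw' Hf. unfold J11.
  rewrite (uniqueness_limite (w c k b) f (w' f) (dw c k b f)); [reflexivity | auto |].
  apply is_derive_Reals, is_derive_w, Hf.
Qed.

Lemma J11_dw_half c k b nu : J11 c k b nu (dw c k b) (1 / 2) = lambda1 c k b nu.
Proof.
  unfold J11, dw, w, lambda1. rewrite exp_arg_half.
  pose proof (exp_pos (b - k)). field. lra.
Qed.

Lemma ex_derive_J11_dw c k b nu : ex_derive (J11 c k b nu (dw c k b)) (1 / 2).
Proof.
  unfold J11, dw, w. pose proof (exp_pos (- k * (1 / 2 / (1 - 1 / 2)) + b)).
  auto_derive; unfold Rdiv, Rminus in *.
  repeat split; try lra.
  all: try (apply Rmult_integral_contrapositive; split); nra.
Qed.

Lemma J11_dw_neg_near_half c k b nu : lambda1 c k b nu < 0 ->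
  exists d, 0 < d /\
    forall f, Rabs (f - 1 / 2) < d -> J11 c k b nu (dw c k b) f < 0.
Proof.
  intros Hl.
  pose proof (ex_derive_continuous _ _ (ex_derive_J11_dw c k b nu)) as Hcont.
  apply continuity_pt_filterlim in Hcont.
  destruct (Hcont (- lambda1 c k b nu)) as [d [Hd Hnear]]; [lra |].
  exists d; split; [exact Hd |]. intros f Hf.
  destruct (Req_dec f (1 / 2)) as [-> | Hne].
  - rewrite J11_dw_half. exact Hl.
  - specialize (Hnear f (conj (conj I (not_eq_sym Hne)) Hf)).
    rewrite J11_dw_half in Hnear. apply Rabs_def2 in Hnear. lra.
Qed.

Lemma h_branch_x1_half c k b nu : h_branch_x1 c k b nu (1 / 2) = hss c k b nu.
Proof.
  unfold h_branch_x1, hss. rewrite w_half.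
  pose proof (exp_pos (b - k)). field. lra.
Qed.

Lemma derivable_pt_lim_h_branch_x1 c k b nu f : f < 1 ->
  derivable_pt_lim (h_branch_x1 c k b nu) f (- J11 c k b nu (dw c k b) f).
Proof.
  intros Hf. apply is_derive_Reals. unfold h_branch_x1, J11, dw, w.
  pose proof (exp_pos (- k * (f / (1 - f)) + b)).
  auto_derive; unfold Rdiv, Rminus in *.
  - repeat split; lra.
  - field. lra.
Qed.

Lemma h_branch_x1_increasing c k b nu d :
  d <= 1 / 2 ->
  (forall f, Rabs (f - 1 / 2) < d -> J11 c k b nu (dw c k b) f < 0) ->
  forall f1 f2, Rabs (f1 - 1 / 2) < d -> Rabs (f2 - 1 / 2) < d -> f1 < f2 ->
  h_branch_x1 c k b nu f1 < h_branch_x1 c k b nu f2.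
Proof.
  intros Hd HJ f1 f2 H1 H2 Hlt.
  apply Rabs_def2 in H1. apply Rabs_def2 in H2.
  destruct (MVT_cor2 (h_branch_x1 c k b nu) (fun y => - J11 c k b nu (dw c k b) y)
              f1 f2 Hlt) as [xi [Exi Hxi]].
  { intros y Hy. apply derivable_pt_lim_h_branch_x1. lra. }
  assert (J11 c k b nu (dw c k b) xi < 0) by (apply HJ, Rabs_def1; lra).
  nra.
Qed.

Lemma x1_branch_exchange c k b s nu w' d
  (Hs : 0 < s) (Hd : d <= 1 / 2)
  (Hw' : forall f, f < 1 -> derivable_pt_lim (w c k b) f (w' f))
  (HJ : forall f, Rabs (f - 1 / 2) < d -> J11 c k b nu (dw c k b) f < 0) :
  forall f, Rabs (f - 1 / 2) < d ->
    let h := h_branch_x1 c k b nu f in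
    Fsys c k b nu h f 1 = 0 /\ Gsys s f 1 = 0 /\
    (h < hss c k b nu -> stable_fp c k b s nu h w' f 1) /\
    (hss c k b nu < h -> unstable_fp c k b s nu h w' f 1).
Proof.
  intros f Hf h.
  assert (Hhalf : Rabs (1 / 2 - 1 / 2) < d)
    by (replace (1 / 2 - 1 / 2) with 0 by ring; rewrite Rabs_R0; apply Rabs_def2 in Hf; lra).
  pose proof (h_branch_x1_increasing c k b nu d Hd HJ) as Hinc.
  pose proof (h_branch_x1_half c k b nu) as Eh.
  assert (HJf : J11 c k b nu w' f < 0).
  { rewrite (J11_dw c k b nu w' f Hw'); [apply HJ, Hf |].
    apply Rabs_def2 in Hf. lra. }
  split; [unfold Fsys, h, h_branch_x1; ring |].
  split; [unfold Gsys; ring |].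
  split; intros Hh; [apply stable_fp_x1 | apply unstable_fp_x1]; auto.
  - destruct (Rtotal_order f (1 / 2)) as [Hlt | [Heq | Hgt]]; [exact Hlt | |].
    + unfold h in Hh. rewrite Heq, Eh in Hh. lra.
    + specialize (Hinc _ _ Hhalf Hf Hgt). unfold h in Hh. lra.
  - destruct (Rtotal_order f (1 / 2)) as [Hlt | [Heq | Hgt]]; [| | exact Hgt].
    + specialize (Hinc _ _ Hf Hhalf Hlt). unfold h in Hh. lra.
    + unfold h in Hh. rewrite Heq, Eh in Hh. lra.
Qed.

Lemma x_branch_half_hss c k b nu :
  0 < hss c k b nu -> x_branch_half c k b nu (hss c k b nu) = 1.
Proof. intros H. unfold x_branch_half. field. lra. Qed.

Lemma Fsys_x_branch_half c k b nu h : h <> 0 ->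
  Fsys c k b nu h (1 / 2) (x_branch_half c k b nu h) = 0.
Proof.
  intros Hh. unfold Fsys, x_branch_half, hss. rewrite w_half.
  pose proof (exp_pos (b - k)). field. lra.
Qed.

Lemma x_branch_half_mul_one_minus c k b nu h : h <> 0 ->
  let x := x_branch_half c k b nu h in
  x * (1 - x) = (h + hss c k b nu) * (h - hss c k b nu) / (4 * h ^ 2).
Proof. intros Hh x. unfold x, x_branch_half. field. exact Hh. Qed.

Lemma half_branch_exchange c k b s nu w'
  (Hs : 0 < s) (Hl1 : lambda1 c k b nu < 0) (Hhss : 0 < hss c k b nu)
  (Hw' : forall f, f < 1 -> derivable_pt_lim (w c k b) f (w' f)) :
  forall h, 0 < h ->
    let x := x_branch_half c k b nu h in
    Fsys c k b nu h (1 / 2) x = 0 /\ Gsys s (1 / 2) x = 0 /\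
    (hss c k b nu < h -> stable_fp c k b s nu h w' (1 / 2) x) /\
    (h < hss c k b nu -> unstable_fp c k b s nu h w' (1 / 2) x).
Proof.
  intros h Hh x.
  pose proof (x_branch_half_mul_one_minus c k b nu h ltac:(lra)) as Ex.
  assert (Hh2 : 0 < 4 * h ^ 2) by nra.
  split; [apply Fsys_x_branch_half; lra |].
  split; [unfold Gsys; replace (1 - 2 * (1 / 2)) with 0 by field; ring |].
  split; intros Hlt.
  - apply stable_fp_half; auto.
    + rewrite (J11_dw c k b nu w' (1 / 2) Hw') by lra.
      rewrite J11_dw_half. exact Hl1.
    + fold x in Ex. rewrite Ex. apply Rdiv_lt_0_compat; nra.
  - apply unstable_fp_half; auto.
    fold x in Ex. rewrite Ex. unfold Rdiv.
    apply Rmult_neg_pos; [nra | apply Rinv_0_lt_compat, Hh2].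
Qed.

Theorem theorem5 (c k b s nu : R) (w' : R -> R)
  (Hc : 0 < c) (Hk : 0 < k) (Hb : 0 < b) (Hs : 0 < s) (Hnu : 0 < nu)
  (Hw' : forall f, f < 1 -> derivable_pt_lim (w c k b) f (w' f))
  (Hl1 : lambda1 c k b nu < 0) (Hhss : 0 < hss c k b nu) :
  (* the two branches meet at (f,x) = (1/2,1) for h = h** *)
  h_branch_x1 c k b nu (1 / 2) = hss c k b nu /\
  x_branch_half c k b nu (hss c k b nu) = 1 /\
  (* exchange of stability near the bifurcation point *)
  exists delta, 0 < delta /\
    (forall f, Rabs (f - 1 / 2) < delta ->
       let h := h_branch_x1 c k b nu f in
       Fsys c k b nu h f 1 = 0 /\ Gsys s f 1 = 0 /\
       (h < hss c k b nu -> stable_fp c k b s nu h w' f 1) /\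
       (hss c k b nu < h -> unstable_fp c k b s nu h w' f 1)) /\
    (forall h, Rabs (h - hss c k b nu) < delta ->
       let x := x_branch_half c k b nu h in
       Fsys c k b nu h (1 / 2) x = 0 /\ Gsys s (1 / 2) x = 0 /\
       (hss c k b nu < h -> stable_fp c k b s nu h w' (1 / 2) x) /\
       (h < hss c k b nu -> unstable_fp c k b s nu h w' (1 / 2) x)).
Proof.
  split; [apply h_branch_x1_half |].
  split; [apply x_branch_half_hss, Hhss |].
  destruct (J11_dw_neg_near_half c k b nu Hl1) as [d0 [Hd0 HJ]].
  set (delta := Rmin d0 (Rmin (1 / 2) (hss c k b nu))).
  assert (Hd_d0 : delta <= d0) by apply Rmin_l.
  assert (Hd_half : delta <= 1 / 2)
    by (eapply Rle_trans; [apply Rmin_r | apply Rmin_l]).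
  assert (Hd_hss : delta <= hss c k b nu)
    by (eapply Rle_trans; [apply Rmin_r | apply Rmin_r]).
  exists delta; split.
  { apply Rmin_glb_lt; [exact Hd0 | apply Rmin_glb_lt; lra]. }
  split.
  - apply (x1_branch_exchange c k b s nu w' delta Hs Hd_half Hw').
    intros f Hf. apply HJ. lra.
  - intros h Hh. apply (half_branch_exchange c k b s nu w' Hs Hl1 Hhss Hw').
    apply Rabs_def2 in Hh. lra.
Qed.
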